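(* For every BI formula $\varphi$, $\varphi\in[\![\varphi]\!]\subseteq[\![\varphi]\!]^{\mathrm{out}}$, where $[\![\varphi]\!]$ is the interpretation of $\varphi$ in the BI algebra $\mathcal C$ with atoms interpreted by $[\![a]\!]=[\![a]\!]^{\mathrm{out}}$, and the leftmost $\varphi$ denotes the single-leaf bunch.
   Context: Formulas of BI: $\varphi,\psi ::= \top \mid \bot \mid \varphi\wedge\psi \mid \varphi\vee\psi \mid \varphi\to\psi \mid \mathsf{emp} \mid \varphi\ast\psi \mid \varphi -\!\!\ast\, \psi \mid a$, $a\in\mathrm{Atom}$. Bunches are finite binary trees whose leaves are formulas or empty bunches $\varnothing_m,\varnothing_a$ and whose internal nodes are labelled by the multiplicative comma ($\Delta_1\mathbin{,}\Delta_2$) or the additive semicolon ($\Delta_1\mathbin{;}\Delta_2$). A bunched context $\Delta(-)$ is a bunch with one leaf replaced by a hole; $\Delta(\Gamma)$ fills it with $\Gamma$. Bunch equivalence $\equiv$ is the least equivalence relation making $\mathbin{,}$ commutative, associative with unit $\varnothing_m$, $\mathbin{;}$ commutative, associative with unit $\varnothing_a$, and closed under contexts; $\mathrm{Bunch}$ is the set of bunches modulo $\equiv$. The cut-free BI sequent calculus ($\Delta\vdash_{\mathsf{cf}}\varphi$) has the rules: (ax) $a\vdash a$ for atoms $a$; (equiv) from $\Delta'\vdash\varphi$, $\Delta\equiv\Delta'$ infer $\Delta\vdash\varphi$; (W;) from $\Delta(\Delta_1)\vdash\varphi$ infer $\Delta(\Delta_1\mathbin{;}\Delta_2)\vdash\varphi$;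 (C;) from $\Delta(\Delta_1\mathbin{;}\Delta_1)\vdash\varphi$ infer $\Delta(\Delta_1)\vdash\varphi$; (empR) $\varnothing_m\vdash\mathsf{emp}$; (empL) from $\Delta(\varnothing_m)\vdash\varphi$ infer $\Delta(\mathsf{emp})\vdash\varphi$; ($\ast$R) from $\Delta_1\vdash\varphi$, $\Delta_2\vdash\psi$ infer $\Delta_1\mathbin{,}\Delta_2\vdash\varphi\ast\psi$; ($\ast$L) from $\Delta(\varphi\mathbin{,}\psi)\vdash\chi$ infer $\Delta(\varphi\ast\psi)\vdash\chi$; ($-\!\ast$R) from $\Delta\mathbin{,}\varphi\vdash\psi$ infer $\Delta\vdash\varphi-\!\!\ast\,\psi$; ($-\!\ast$L) from $\Delta_1\vdash\varphi$, $\Delta(\Delta_2\mathbin{,}\psi)\vdash\chi$ infer $\Delta((\Delta_1\mathbin{,}\Delta_2)\mathbin{,}(\varphi-\!\!\ast\,\psi))\vdash\chi$; ($\top$R) $\varnothing_a\vdash\top$; ($\top$L) from $\Delta(\varnothing_a)\vdash\varphi$ infer $\Delta(\top)\vdash\varphi$; ($\wedge$R) from $\Delta_1\vdash\varphi$, $\Delta_2\vdash\psi$ infer $\Delta_1\mathbin{;}\Delta_2\vdash\varphi\wedge\psi$; ($\wedge$L) from $\Delta(\varphi\mathbin{;}\psi)\vdash\chi$ infer $\Delta(\varphi\wedge\psi)\vdash\chi$; ($\to$R) from $\Delta\mathbin{;}\varphi\vdash\psi$ infer $\Delta\vdash\varphi\to\psi$; ($\to$L) from $\Delta_1\vdash\varphi$,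 $\Delta(\Delta_2\mathbin{;}\psi)\vdash\chi$ infer $\Delta((\Delta_1\mathbin{;}\Delta_2)\mathbin{;}(\varphi\to\psi))\vdash\chi$; ($\bot$L) $\Delta(\bot)\vdash\varphi$; ($\vee$R1/2) from $\Delta\vdash\varphi$ (resp. $\Delta\vdash\psi$) infer $\Delta\vdash\varphi\vee\psi$; ($\vee$L) from $\Delta(\varphi)\vdash\chi$, $\Delta(\psi)\vdash\chi$ infer $\Delta(\varphi\vee\psi)\vdash\chi$. (No cut rule.) For a formula $\varphi$, $[\![\varphi]\!]^{\mathrm{out}}=\{\Delta\in\mathrm{Bunch}\mid\Delta\vdash_{\mathsf{cf}}\varphi\}$. For $X\subseteq\mathrm{Bunch}$, $\mathrm{cl}(X)=\bigcap\{[\![\varphi]\!]^{\mathrm{out}}\mid X\subseteq[\![\varphi]\!]^{\mathrm{out}}\}$, and $\mathcal C=\{X\subseteq\mathrm{Bunch}\mid X=\mathrm{cl}(X)\}$. $\mathcal C$ is a BI algebra (bounded Heyting algebra with a residuated commutative monoid $(\ast,\mathsf{emp},-\!\!\ast)$) with operations: $\mathsf{emp}=\mathrm{cl}(\{\varnothing_m\})$, $\top=\mathrm{Bunch}$, $\bot=\mathrm{cl}(\emptyset)$, $X\vee Y=\mathrm{cl}(X\cup Y)$, $X\wedge Y=X\cap Y$, $X\ast Y=\mathrm{cl}(\{\Delta\mathbin{,}\Delta'\mid\Delta\in X,\Delta'\in Y\})$, $X-\!\!\ast\,Y=\{\Delta\mid\forall\Delta'\in X.\ (\Delta\mathbin{,}\Delta')\in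 Y\}$, $X\to Y=\{\Delta\mid\forall\Delta'\in X.\ (\Delta\mathbin{;}\Delta')\in Y\}$. Formulas are interpreted homomorphically in $\mathcal C$ (each connective by the corresponding operation) given the interpretation of atoms. *)

Set Implicit Arguments.

Section BI.
Variable Atom : Type.

Inductive formula : Type :=
| FTop | FBot
| FAnd (p q : formula) | FOr (p q : formula) | FImp (p q : formula)
| FEmp | FStar (p q : formula) | FWand (p q : formula)
| FAtom (a : Atom).

Inductive bunch : Type :=
| BForm (p : formula)
| BEmpM
| BEmpA
| BComma (d1 d2 : bunch)
| BSemi (d1 d2 : bunch).

Inductive bctx : Type :=
| Hole
| CCommaL (c : bctx) (d : bunch)
| CCommaR (d : bunch) (c : bctx)
| CSemiL (c : bctx) (d : bunch)
| CSemiR (d : bunch) (c : bctx).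

Fixpoint fill (c : bctx) (g : bunch) : bunch :=
  match c with
  | Hole => g
  | CCommaL c d => BComma (fill c g) d
  | CCommaR d c => BComma d (fill c g)
  | CSemiL c d => BSemi (fill c g) d
  | CSemiR d c => BSemi d (fill c g)
  end.

Inductive beq : bunch -> bunch -> Prop :=
| beq_refl d : beq d d
| beq_sym d e : beq d e -> beq e d
| beq_trans d e f : beq d e -> beq e f -> beq d f
| beq_comma_comm d e : beq (BComma d e) (BComma e d)
| beq_comma_assoc d e f : beq (BComma d (BComma e f)) (BComma (BComma d e) f)
| beq_comma_unit d : beq (BComma d BEmpM) d
| beq_semi_comm d e : beq (BSemi d e) (BSemi e d)
| beq_semi_assoc d e f : beq (BSemi d (BSemi e f)) (BSemi (BSemi d e) f)
| beq_semi_unit d : beq (BSemi d BEmpA) d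
| beq_ctx c d e : beq d e -> beq (fill c d) (fill c e).

Inductive cf : bunch -> formula -> Prop :=
| cf_ax a : cf (BForm (FAtom a)) (FAtom a)
| cf_equiv d d' p : cf d' p -> beq d d' -> cf d p
| cf_W c d1 d2 p : cf (fill c d1) p -> cf (fill c (BSemi d1 d2)) p
| cf_C c d1 p : cf (fill c (BSemi d1 d1)) p -> cf (fill c d1) p
| cf_empR : cf BEmpM FEmp
| cf_empL c p : cf (fill c BEmpM) p -> cf (fill c (BForm FEmp)) p
| cf_starR d1 d2 p q : cf d1 p -> cf d2 q -> cf (BComma d1 d2) (FStar p q)
| cf_starL c p q r :
    cf (fill c (BComma (BForm p) (BForm q))) r -> cf (fill c (BForm (FStar p q))) r
| cf_wandR d p q : cf (BComma d (BForm p)) q -> cf d (FWand p q)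
| cf_wandL c d1 d2 p q r :
    cf d1 p -> cf (fill c (BComma d2 (BForm q))) r ->
    cf (fill c (BComma (BComma d1 d2) (BForm (FWand p q)))) r
| cf_topR : cf BEmpA FTop
| cf_topL c p : cf (fill c BEmpA) p -> cf (fill c (BForm FTop)) p
| cf_andR d1 d2 p q : cf d1 p -> cf d2 q -> cf (BSemi d1 d2) (FAnd p q)
| cf_andL c p q r :
    cf (fill c (BSemi (BForm p) (BForm q))) r -> cf (fill c (BForm (FAnd p q))) r
| cf_impR d p q : cf (BSemi d (BForm p)) q -> cf d (FImp p q)
| cf_impL c d1 d2 p q r :
    cf d1 p -> cf (fill c (BSemi d2 (BForm q))) r ->
    cf (fill c (BSemi (BSemi d1 d2) (BForm (FImp p q)))) r
| cf_botL c p : cf (fill c (BForm FBot)) p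
| cf_orR1 d p q : cf d p -> cf d (FOr p q)
| cf_orR2 d p q : cf d q -> cf d (FOr p q)
| cf_orL c p q r :
    cf (fill c (BForm p)) r -> cf (fill c (BForm q)) r -> cf (fill c (BForm (FOr p q))) r.

(* Subsets of Bunch (bunches modulo ≡) are represented as predicates on raw
   bunches; all sets below are ≡-closed. *)
Definition bset := bunch -> Prop.

Definition out (p : formula) : bset := fun d => cf d p.

Definition cl (X : bset) : bset :=
  fun d => forall p : formula, (forall g, X g -> out p g) -> out p d.

Definition C_emp : bset := cl (fun d => d = BEmpM).
Definition C_top : bset := fun _ => True.
Definition C_bot : bset := cl (fun _ => False).
Definition C_or (X Y : bset) : bset := cl (fun d => X d \/ Y d).
Definition C_and (X Y : bset) : bset := fun d => X d /\ Y d.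
Definition C_star (X Y : bset) : bset :=
  cl (fun d => exists d1 d2, X d1 /\ Y d2 /\ d = BComma d1 d2).
Definition C_wand (X Y : bset) : bset :=
  fun d => forall d', X d' -> Y (BComma d d').
Definition C_imp (X Y : bset) : bset :=
  fun d => forall d', X d' -> Y (BSemi d d').

Fixpoint interp (v : Atom -> bset) (p : formula) : bset :=
  match p with
  | FTop => C_top
  | FBot => C_bot
  | FAnd p q => C_and (interp v p) (interp v q)
  | FOr p q => C_or (interp v p) (interp v q)
  | FImp p q => C_imp (interp v p) (interp v q)
  | FEmp => C_emp
  | FStar p q => C_star (interp v p) (interp v q)
  | FWand p q => C_wand (interp v p) (interp v q)
  | FAtom a => v a
  end.

Definition canon_val (a : Atom) : bset := out (FAtom a).

End BI.

(* Okada's argument.  Say that a bunch d replaces φ when, in every cut-free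
   derivation of a sequent Γ(φ) ⊢ r, the leaf φ may be exchanged for d.  By
   induction on φ, every bunch replacing φ lies in [[φ]] (left rules), and
   [[φ]] ⊆ [[φ]]^out (right rules); φ trivially replaces itself.  The closure
   cases work because each cl X is an intersection of sets [[ψ]]^out, and
   membership in [[ψ]]^out is inherited by replacing bunches. *)

Section Okada.
Variable Atom : Type.
Notation formula := (formula Atom).
Notation bunch := (bunch Atom).
Notation bctx := (bctx Atom).
Notation bset := (bset Atom).
Notation cf := (@cf Atom).
Notation sem := (interp (@canon_val Atom)).

Fixpoint bctx_comp (c c' : bctx) : bctx :=
  match c with
  | Hole _ => c'
  | CCommaL c d => CCommaL (bctx_comp c c') d
  | CCommaR d c => CCommaR d (bctx_comp c c')
  | CSemiL c d => CSemiL (bctx_comp c c') d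
  | CSemiR d c => CSemiR d (bctx_comp c c')
  end.

Lemma fill_comp c c' g : fill (bctx_comp c c') g = fill c (fill c' g).
Proof. induction c; simpl; congruence. Qed.

Lemma cf_fill_beq c d e r : beq d e -> cf (fill c e) r -> cf (fill c d) r.
Proof. intros E H. apply cf_equiv with (fill c e); [exact H | apply beq_ctx, E]. Qed.

Lemma beq_semi_unitl d : beq (BSemi (BEmpA Atom) d) d.
Proof. eapply beq_trans; [apply beq_semi_comm | apply beq_semi_unit]. Qed.

Lemma beq_comma_unitl d : beq (BComma (BEmpM Atom) d) d.
Proof. eapply beq_trans; [apply beq_comma_comm | apply beq_comma_unit]. Qed.

Lemma cf_top d : cf d (FTop Atom).
Proof.
  apply cf_equiv with (BSemi (BEmpA Atom) d).
  - exact (cf_W (Hole _) _ d (cf_topR Atom)).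
  - apply beq_sym, beq_semi_unitl.
Qed.

Lemma cf_impL_unit c d p q r :
  cf d p -> cf (fill c (BForm q)) r -> cf (fill c (BSemi d (BForm (FImp p q)))) r.
Proof.
  intros Hp Hq.
  apply cf_fill_beq with (BSemi (BSemi d (BEmpA Atom)) (BForm (FImp p q))).
  - apply (beq_ctx (CSemiL (Hole _) _)), beq_sym, beq_semi_unit.
  - apply cf_impL; [exact Hp |].
    apply cf_fill_beq with (BForm q); [apply beq_semi_unitl | exact Hq].
Qed.

Lemma cf_wandL_unit c d p q r :
  cf d p -> cf (fill c (BForm q)) r -> cf (fill c (BComma d (BForm (FWand p q)))) r.
Proof.
  intros Hp Hq.
  apply cf_fill_beq with (BComma (BComma d (BEmpM Atom)) (BForm (FWand p q))).
  - apply (beq_ctx (CCommaL (Hole _) _)), beq_sym, beq_comma_unit.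
  - apply cf_wandL; [exact Hp |].
    apply cf_fill_beq with (BForm q); [apply beq_comma_unitl | exact Hq].
Qed.

Definition replaces (d : bunch) (p : formula) : Prop :=
  forall c r, cf (fill c (BForm p)) r -> cf (fill c d) r.

Lemma replaces_refl p : replaces (BForm p) p.
Proof. intros c r H; exact H. Qed.

Lemma replaces_nested c c' {d p r} :
  replaces d p -> cf (fill c (fill c' (BForm p))) r -> cf (fill c (fill c' d)) r.
Proof. intros Hd H. rewrite <- fill_comp in *. apply Hd, H. Qed.

Lemma replaces_andl {d p q} : replaces d (FAnd p q) -> replaces d p.
Proof. intros Hd c r H. apply Hd, cf_andL, cf_W, H. Qed.

Lemma replaces_andr {d p q} : replaces d (FAnd p q) -> replaces d q.
Proof.
  intros Hd c r H. apply Hd, cf_andL.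
  apply cf_fill_beq with (BSemi (BForm q) (BForm p)); [apply beq_semi_comm |].
  apply cf_W, H.
Qed.

Lemma replaces_imp {d d' p q} :
  replaces d (FImp p q) -> cf d' p -> replaces (BSemi d d') q.
Proof.
  intros Hd Hp c r H.
  apply cf_fill_beq with (BSemi d' d); [apply beq_semi_comm |].
  apply (replaces_nested c (CSemiR d' (Hole _)) Hd), cf_impL_unit; assumption.
Qed.

Lemma replaces_wand {d d' p q} :
  replaces d (FWand p q) -> cf d' p -> replaces (BComma d d') q.
Proof.
  intros Hd Hp c r H.
  apply cf_fill_beq with (BComma d' d); [apply beq_comma_comm |].
  apply (replaces_nested c (CCommaR d' (Hole _)) Hd), cf_wandL_unit; assumption.
Qed.

Lemma cl_sub_out (X : bset) p : (forall g, X g -> out p g) -> forall d, cl X d -> out p d.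
Proof. intros HX d Hd. exact (Hd p HX). Qed.

Lemma cl_replaces (X : bset) d p : cl X (BForm p) -> replaces d p -> cl X d.
Proof. intros Hp Hd r HX. exact (Hd (Hole _) r (Hp r HX)). Qed.

Lemma replaces_sem_out (p : formula) :
  (forall d, replaces d p -> sem p d) /\ (forall d, sem p d -> out p d).
Proof.
  induction p as [| | p [Lp Rp] q [Lq Rq] | p [Lp Rp] q [Lq Rq] | p [Lp Rp] q [Lq Rq]
                 | | p [Lp Rp] q [Lq Rq] | p [Lp Rp] q [Lq Rq] | a];
    simpl; split.
  - intros; exact I.
  - intros d _; apply cf_top.
  - intros d Hd. apply cl_replaces with (FBot Atom); [| exact Hd].
    intros r _. apply (cf_botL (Hole _)).
  - apply cl_sub_out. intros g [].
  - intros d Hd. split.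
    + apply Lp, (replaces_andl Hd).
    + apply Lq, (replaces_andr Hd).
  - intros d [Hp Hq]. apply (cf_C (Hole _) d), cf_andR; [apply Rp | apply Rq]; assumption.
  - intros d Hd. apply cl_replaces with (FOr p q); [| exact Hd].
    intros r HX. apply (cf_orL (Hole _)); apply HX.
    + left; apply Lp, replaces_refl.
    + right; apply Lq, replaces_refl.
  - apply cl_sub_out. intros g [Hg | Hg]; [apply cf_orR1, Rp | apply cf_orR2, Rq]; exact Hg.
  - intros d Hd d' Hd'. apply Lq, (replaces_imp Hd), Rp, Hd'.
  - intros d Hd. apply cf_impR, Rq, Hd, Lp, replaces_refl.
  - intros d Hd. apply cl_replaces with (FEmp Atom); [| exact Hd].
    intros r HX. apply (cf_empL (Hole _)), HX. reflexivity.
  - apply cl_sub_out. intros g ->. apply cf_empR.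
  - intros d Hd. apply cl_replaces with (FStar p q); [| exact Hd].
    intros r HX. apply (cf_starL (Hole _)), HX.
    exists (BForm p), (BForm q).
    split; [apply Lp, replaces_refl | split; [apply Lq, replaces_refl | reflexivity]].
  - apply cl_sub_out. intros g (d1 & d2 & H1 & H2 & ->). apply cf_starR; [apply Rp | apply Rq]; assumption.
  - intros d Hd d' Hd'. apply Lq, (replaces_wand Hd), Rp, Hd'.
  - intros d Hd. apply cf_wandR, Rq, Hd, Lp, replaces_refl.
  - intros d Hd. apply (Hd (Hole _)), cf_ax.
  - intros d Hd; exact Hd.
Qed.

End Okada.

Theorem lemma6p6 (Atom : Type) (p : formula Atom) :
  interp (@canon_val Atom) p (BForm p) /\
  (forall d : bunch Atom, interp (@canon_val Atom) p d -> out p d).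
Proof.
  destruct (replaces_sem_out Atom p) as [Hreplaces Hout].
  split; [apply Hreplaces, replaces_refl | exact Hout].
Qed.
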